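(* Let $\mathcal{A}\subseteq\mathcal{B}$ be sub-$\sigma$-algebras of a complete probability space $(\Omega,\mathcal{F},P)$. If $M:L^+_\infty(\mathcal{B})\to L^+_\infty(\mathcal{A})$ is a weak $\mathcal{A}$-homogeneous, regular, monotone, sublinear operator, then $M$ is $\mathcal{A}$-homogeneous.
   Context: Weak $\mathcal{A}$-homogeneous: $M(1_AX)=1_AM(X)$ for all $A\in\mathcal{A}$, $X\in L^+_\infty(\mathcal{B})$. $\mathcal{A}$-homogeneous: $M(fX)=fM(X)$ for all $f\in L^+_\infty(\mathcal{A})$. Regular: $X_n\downarrow0$ a.s. implies $M(X_n)\to0$ a.s. Sublinear: $M(X+Y)\le M(X)+M(Y)$, $M(\lambda X)=\lambda M(X)$ for real $\lambda\ge0$. Monotone: $X\ge Y\Rightarrow M(X)\ge M(Y)$. *)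

From HB Require Import structures.
From mathcomp Require Import all_boot all_order all_algebra.
From mathcomp Require Import all_classical all_reals all_analysis.
Set Implicit Arguments. Unset Strict Implicit. Unset Printing Implicit Defensive.
Import Order.TTheory GRing.Theory Num.Theory.
Local Open Scope classical_set_scope.
Local Open Scope ring_scope.

Definition subsigma_alg d (T : measurableType d) (G : set (set T)) :=
  sigma_algebra setT G /\ G `<=` measurable.

Definition G_measurable d (T : measurableType d) (R : realType)
  (G : set (set T)) (f : T -> R) :=
  forall Y : set R, measurable Y -> G (f @^-1` Y).

(* f is a (representative of an element of) L^+_infty(G): G-measurable,
   nonnegative and bounded. *)
Definition Linf_pos d (T : measurableType d) (R : realType)
  (G : set (set T)) (f : T -> R) :=
  [/\ G_measurable G f, (forall x, 0 <= f x) & exists c : R, forall x, f x <= c].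

Definition indic_set {T} {R : realType} (S : set T) : T -> R :=
  fun x => if `[< S x >] then 1 else 0.

From HB Require Import structures.
From mathcomp Require Import all_boot all_order all_algebra.
From mathcomp Require Import all_classical all_reals all_analysis.
From mathcomp Require Import lra.
Import Order.TTheory GRing.Theory Num.Theory.
Local Open Scope classical_set_scope.
Local Open Scope ring_scope.

Set Implicit Arguments. Unset Strict Implicit. Unset Printing Implicit Defensive.

(* On an A-measurable level set S = {a <= f < b}, weak homogeneity, positive
   homogeneity and monotonicity squeeze M (f X) between a M X and b M X.
   Letting the grid 1/(n+1) N of levels refine, M (f X) = f M X a.s.. *)

Section measurability.
Context d (T : measurableType d) (R : realType) (G : set (set T)).
Hypothesis sG : sigma_algebra setT G.

Lemma G_measurableP (f : T -> R) :
  G_measurable G f <-> measurable_fun (setT : set (g_sigma_algebraType G)) f.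
Proof.
have E := measurable_g_measurableTypeE sG.
split=> [mf _ Y mY | mf Y mY]; first by rewrite setTI E; exact: mf.
by have := mf measurableT Y mY; rewrite setTI E.
Qed.

Lemma Linf_posM (f g : T -> R) :
  Linf_pos G f -> Linf_pos G g -> Linf_pos G (fun y => f y * g y).
Proof.
move=> [/G_measurableP mf f0 [c1 hc1]] [/G_measurableP mg g0 [c2 hc2]]; split.
- exact/G_measurableP/measurable_realfun.measurable_funM.
- by move=> x; rewrite mulr_ge0.
- by exists (c1 * c2) => x; rewrite ler_pM.
Qed.

Lemma Linf_pos_cst (l : R) : 0 <= l -> Linf_pos G (fun _ => l).
Proof. by move=> l0; split=> //; [exact/G_measurableP/measurable_cst | exists l]. Qed.

Lemma Linf_pos_indic (S : set T) : G S -> Linf_pos G (indic_set S : T -> R).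
Proof.
move=> GS; split; [| by move=> x; rewrite /indic_set; case: asboolP
                   | by exists 1 => x; rewrite /indic_set; case: asboolP].
have -> : (indic_set S : T -> R) = \1_S.
  by apply/funext => x; rewrite /indic_set indicE; case: asboolP => Sx;
    [rewrite mem_set | rewrite memNset].
apply/G_measurableP; apply: (@measurable_realfun.measurable_indic _ (g_sigma_algebraType G)).
by rewrite /measurable /= (sigma_algebra_id sG).
Qed.

End measurability.

Lemma Linf_pos_sub d (T : measurableType d) (R : realType) (G G' : set (set T))
  (f : T -> R) : G `<=` G' -> Linf_pos G f -> Linf_pos G' f.
Proof. by move=> GG' [mf f0 fb]; split=> // Y mY; exact/GG'/mf. Qed.

Lemma eq0_of_le_invn (R : realType) (e m : R) : 0 <= e ->
  (forall n : nat, e * n.+1%:R <= m) -> e = 0.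
Proof.
move=> e0 hm; apply/eqP; rewrite eq_le e0 andbT leNgt; apply/negP => ep.
have := hm (Num.truncn (m / e)); have := truncnS_gt (m / e).
rewrite ltr_pdivrMr // mulrC => h1 h2.
by have := lt_le_trans h1 h2; rewrite ltxx.
Qed.

Lemma eq_mul_of_grid_bounds (R : realType) (y m u : R) : 0 <= y -> 0 <= m ->
  (forall n k : nat, k%:R / n.+1%:R <= y < k.+1%:R / n.+1%:R ->
     k%:R / n.+1%:R * m <= u <= k.+1%:R / n.+1%:R * m) ->
  u = y * m.
Proof.
move=> y0 m0 hgrid; apply/eqP; rewrite -subr_eq0 -normr_eq0; apply/eqP.
apply: (@eq0_of_le_invn _ _ m (normr_ge0 _)) => n.
have N0 : 0 < n.+1%:R :> R by rewrite ltr0n.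
set k := Num.truncn (y * n.+1%:R).
have /andP[hk1 hk2] := truncn_itv (mulr_ge0 y0 (ltW N0)).
have ha : k%:R / n.+1%:R <= y by rewrite ler_pdivrMr.
have hb : y < k.+1%:R / n.+1%:R by rewrite ltr_pdivlMr.
have /andP[u1 u2] := hgrid n k (introT andP (conj ha hb)).
set a := k%:R / n.+1%:R in ha u1 *; set b := k.+1%:R / n.+1%:R in hb u2 *.
have ya : a * m <= y * m by rewrite ler_wpM2r.
have yb : y * m <= b * m by rewrite ler_wpM2r // ltW.
have width : b * m - a * m = m / n.+1%:R.
  by rewrite -mulrBl -mulrBl -natrB // subSnn mul1r mulrC.
rewrite -ler_pdivlMr // -width ler_norml.
by apply/andP; split; lra.
Qed.

Section level_set_sandwich.
Context d (T : measurableType d) (R : realType) (P : probability T R).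
Variables (A B : set (set T)) (M : (T -> R) -> (T -> R)).
Hypotheses (sB : sigma_algebra setT B) (AB : A `<=` B).
Hypothesis M_weak_homog : forall S X, A S -> Linf_pos B X ->
  {ae P, forall x, M (fun y => indic_set S y * X y) x = indic_set S x * M X x}.
Hypothesis M_monotone : forall X Y, Linf_pos B X -> Linf_pos B Y ->
  {ae P, forall x, Y x <= X x} -> {ae P, forall x, M Y x <= M X x}.
Hypothesis M_pos_homog : forall (l : R) X, 0 <= l -> Linf_pos B X ->
  {ae P, forall x, M (fun y => l * X y) x = l * M X x}.

Lemma M_sandwich_on (S : set T) (f X : T -> R) (a b : R) :
  A S -> Linf_pos B f -> Linf_pos B X -> 0 <= a -> a <= b ->
  (forall y, S y -> a <= f y <= b) ->
  {ae P, forall x, S x -> a * M X x <= M (fun y => f y * X y) x <= b * M X x}.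
Proof.
move=> AS fB XB a0 ab hf; have b0 := le_trans a0 ab.
have IB : Linf_pos B (indic_set S : T -> R) := Linf_pos_indic R sB (AB AS).
have fXB := Linf_posM sB fB XB.
set SX := fun y => indic_set S y * X y.
have SXB : Linf_pos B SX := Linf_posM sB IB XB.
have X0 : forall y, 0 <= X y by case: XB.
have lower : {ae P, forall x,
    M (fun y => a * SX y) x <= M (fun y => indic_set S y * (f y * X y)) x}.
  apply: M_monotone (Linf_posM sB IB fXB) (Linf_posM sB (Linf_pos_cst sB a0) SXB) _.
  apply: aeW => y; rewrite /SX /indic_set; case: asboolP => [/hf /andP[fa _] | _].
    by rewrite !mul1r mulrC [f y * _]mulrC ler_wpM2l.
  by rewrite !mul0r mulr0.
have upper : {ae P, forall x,
    M (fun y => indic_set S y * (f y * X y)) x <= M (fun y => b * SX y) x}.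
  apply: M_monotone (Linf_posM sB (Linf_pos_cst sB b0) SXB) (Linf_posM sB IB fXB) _.
  apply: aeW => y; rewrite /SX /indic_set; case: asboolP => [/hf /andP[_ fb] | _].
    by rewrite !mul1r [f y * _]mulrC [b * _]mulrC ler_wpM2l.
  by rewrite !mul0r mulr0.
have homog_fX := M_weak_homog AS fXB; have homog_X := M_weak_homog AS XB.
have homog_a := M_pos_homog a0 SXB; have homog_b := M_pos_homog b0 SXB.
apply: filterS3 (filterI homog_fX homog_X) (filterI homog_a homog_b)
  (filterI lower upper).
move=> x [eq_fX eq_X] [eq_a eq_b] [le_a le_b] Sx.
have S1 : indic_set S x = 1 :> R by rewrite /indic_set; case: asboolP.
move: eq_fX eq_X le_a le_b; rewrite S1 !mul1r /SX => eq_fX eq_X.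
by rewrite eq_a eq_b eq_X eq_fX => -> ->.
Qed.

End level_set_sandwich.

Theorem lemma3p6 (d : measure_display) (T : measurableType d) (R : realType)
  (P : probability T R) (A B : set (set T)) (M : (T -> R) -> (T -> R)) :
  measure_is_complete P ->
  subsigma_alg A -> subsigma_alg B -> A `<=` B ->
  (* M : L^+_oo(B) -> L^+_oo(A) *)
  (forall X, Linf_pos B X -> Linf_pos A (M X)) ->
  (* M is well defined on a.s.-equivalence classes *)
  (forall X Y, Linf_pos B X -> Linf_pos B Y ->
     {ae P, forall x, X x = Y x} -> {ae P, forall x, M X x = M Y x}) ->
  (* weak A-homogeneity *)
  (forall S X, A S -> Linf_pos B X ->
     {ae P, forall x, M (fun y => indic_set S y * X y) x = indic_set S x * M X x}) ->
  (* regularity *)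
  (forall Xn : nat -> T -> R, (forall n, Linf_pos B (Xn n)) ->
     {ae P, forall x, (forall n, Xn n.+1 x <= Xn n x) /\ (Xn n x @[n --> \oo] --> 0)} ->
     {ae P, forall x, M (Xn n) x @[n --> \oo] --> 0}) ->
  (* monotonicity *)
  (forall X Y, Linf_pos B X -> Linf_pos B Y ->
     {ae P, forall x, Y x <= X x} -> {ae P, forall x, M Y x <= M X x}) ->
  (* sublinearity *)
  (forall X Y, Linf_pos B X -> Linf_pos B Y ->
     {ae P, forall x, M (fun y => X y + Y y) x <= M X x + M Y x}) ->
  (forall (l : R) X, 0 <= l -> Linf_pos B X ->
     {ae P, forall x, M (fun y => l * X y) x = l * M X x}) ->
  (* conclusion: A-homogeneity *)
  forall f X, Linf_pos A f -> Linf_pos B X ->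
    {ae P, forall x, M (fun y => f y * X y) x = f x * M X x}.
Proof.
move=> _ _ [sB _] AB M_Linf _ M_weak_homog _ M_monotone _ M_pos_homog f X fA XB.
have [mf f0 _] := fA.
have level n k : {ae P, forall x, (f @^-1` `[k%:R / n.+1%:R, k.+1%:R / n.+1%:R[) x ->
    k%:R / n.+1%:R * M X x <= M (fun y => f y * X y) x <= k.+1%:R / n.+1%:R * M X x}.
  apply: (M_sandwich_on sB AB M_weak_homog M_monotone M_pos_homog).
  - by apply: mf; exact: measurable_itv.
  - exact: Linf_pos_sub AB fA.
  - exact: XB.
  - by rewrite divr_ge0.
  - by rewrite ler_pM2r ?invr_gt0 ?ltr0n // ler_nat.
  - by move=> y; rewrite /= in_itv /= => /andP[-> /ltW ->].
apply: filterS (ae_foralln (fun n => ae_foralln (level n))) => x grid.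
have [_ M_X0 _] := M_Linf X XB.
exact: eq_mul_of_grid_bounds (f0 x) (M_X0 x) grid.
Qed.
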